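(* Let $H$ be a complex Hilbert space, $\varphi,\psi:[0,1]\to\mathbb{R}$ continuous, $A\in\mathbb{B}(H)$ and $t\in[0,1]$. Then $$\omega_t^2(\varphi,\psi;A)\le\big(|\varphi(t)|^2+|\psi(t)|^2\big)\omega^2(A)+|\varphi(t)\psi(t)|\,\omega(A^2)+\frac12|\varphi(t)\psi(t)|\,\|AA^*+A^*A\|.$$
   Context: $S_1(H)$ is the unit sphere of $H$, $\omega(T)=\sup_{x\in S_1(H)}|\langle Tx,x\rangle|$, and $\omega_t(\varphi,\psi;A)=\sup_{x\in S_1(H)}|\langle(\varphi(t)A+\psi(t)A^* )x,x\rangle|$. *)

From HB Require Import structures.
From mathcomp Require Import all_boot all_order all_algebra.
From mathcomp Require Import all_classical all_reals all_analysis.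
From mathcomp Require Import complex.
Set Implicit Arguments. Unset Strict Implicit. Unset Printing Implicit Defensive.
Import numFieldNormedType.Exports.
Import Order.TTheory GRing.Theory Num.Theory.
Local Open Scope ring_scope.
Local Open Scope classical_set_scope.

Section Hilbert.
Variable R : realType.
Variable V : lmodType R[i].
Variable ip : V -> V -> R[i].   (* <x, y>, linear in x, conjugate-linear in y *)

Definition is_inner_product : Prop :=
  [/\ forall x y z, ip (x + y) z = ip x z + ip y z,
      forall (a : R[i]) x y, ip (a *: x) y = a * ip x y,
      forall x y, ip y x = conjc (ip x y),
      forall x, 0 <= ip x x
    & forall x, ip x x = 0 -> x = 0].

Definition hnorm (x : V) : R := Num.sqrt (complex.Re (ip x x)).

Definition hcomplete : Prop :=
  forall u : nat -> V,
    (forall e : R, 0 < e -> exists N : nat, forall m n : nat,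
        (N <= m)%N -> (N <= n)%N -> hnorm (u m - u n) < e) ->
    exists l : V, forall e : R, 0 < e -> exists N : nat, forall n : nat,
        (N <= n)%N -> hnorm (u n - l) < e.

Definition is_hilbert : Prop := is_inner_product /\ hcomplete.

Definition bounded_op (A : V -> V) : Prop :=
  [/\ forall x y, A (x + y) = A x + A y,
      forall (a : R[i]) x, A (a *: x) = a *: A x
    & exists M : R, forall x, hnorm (A x) <= M * hnorm x].

Definition is_adjoint (A B : V -> V) : Prop :=
  forall x y, ip (A x) y = ip x (B y).

Definition unit_sphere : set V := [set x | hnorm x = 1].

Definition numrad (T : V -> V) : R :=
  sup [set Normc.normc (ip (T x) x) | x in unit_sphere].

Definition opnorm (T : V -> V) : R :=
  sup [set hnorm (T x) | x in unit_sphere].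

Definition omega_t (phi psi : R -> R) (A Astar : V -> V) (t : R) : R :=
  sup [set Normc.normc
             (ip (Complex (phi t) 0 *: A x + Complex (psi t) 0 *: Astar x) x)
      | x in unit_sphere].

End Hilbert.

(* For a unit vector x put a = <Ax, x>.  Then <(phi A + psi A^* )x, x> is
   phi a + psi conj(a), whose squared modulus is at most
   (phi^2 + psi^2) |a|^2 + |phi psi| (2 |a|^2).  Since <x, A^* x> = a and
   <Ax, A^* x> = <A^2 x, x>, Buzano's inequality gives
   2 |a|^2 <= |Ax| |A^* x| + |<A^2 x, x>|, and by AM-GM
   |Ax| |A^* x| <= (|Ax|^2 + |A^* x|^2) / 2 = Re <(A A^* + A^* A) x, x> / 2.
   Taking suprema over the unit sphere yields the bound. *)

From HB Require Import structures.
From mathcomp Require Import all_boot all_order all_algebra.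
From mathcomp Require Import all_classical all_reals all_analysis.
From mathcomp Require Import complex ring lra.
Import numFieldNormedType.Exports.
Set Implicit Arguments. Unset Strict Implicit. Unset Printing Implicit Defensive.
Import Order.TTheory GRing.Theory Num.Theory.
Local Open Scope ring_scope.
Local Open Scope classical_set_scope.
Import Normc.

Section ComplexFacts.
Variable R : rcfType.
Implicit Types (a b : R) (z : R[i]).
Local Open Scope complex_scope.

Lemma normc_ge0 z : 0 <= normc z.
Proof. by case: z => a b; exact: sqrtr_ge0. Qed.

Lemma sqr_normc z : normc z ^+ 2 = complex.Re z ^+ 2 + complex.Im z ^+ 2.
Proof. by case: z => a b; rewrite /= sqr_sqrtr // addr_ge0 ?sqr_ge0. Qed.

Lemma Re_le_normc z : complex.Re z <= normc z.
Proof.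
case: z => a b; apply: le_trans (ler_norm a) _.
by rewrite /= -sqrtr_sqr ler_wsqrtr // lerDl sqr_ge0.
Qed.

Lemma normc_real_comb a b z :
  normc (a%:C * z + b%:C * z^*) ^+ 2 <=
    (`|a| ^+ 2 + `|b| ^+ 2) * normc z ^+ 2 + `|a * b| * (2 * normc z ^+ 2).
Proof.
rewrite !real_normK ?num_real // !sqr_normc.
case: z => x y /=; rewrite !mul0r !subr0 !addr0.
have := ler_norm (a * b); have := ler_norm (- (a * b)); rewrite normrN.
have := sqr_ge0 x; have := sqr_ge0 y; nra.
Qed.

End ComplexFacts.

Lemma quadratic_ge0_le (R : realFieldType) (X Y N : R) :
  0 <= N -> 0 <= Y -> (forall t, 0 <= X - 2 * t * N + t ^+ 2 * N * Y) ->
  N <= X * Y.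
Proof.
move=> N_ge0 Y_ge0 q.
have [->|N_gt0] := eqVneq N 0; first by have := q 0; nra.
have {}N_gt0 : 0 < N by rewrite lt_def N_gt0.
have [Y0|Y_gt0] := eqVneq Y 0.
  have := q ((X + 1) / (2 * N)); rewrite Y0 mulr0 addr0.
  suff -> : 2 * ((X + 1) / (2 * N)) * N = X + 1 by lra.
  by field; rewrite gt_eqF.
have {}Y_gt0 : 0 < Y by rewrite lt_def Y_gt0.
have := q Y^-1.
suff -> : X - 2 * Y^-1 * N + Y^-1 ^+ 2 * N * Y = (X * Y - N) / Y.
  by rewrite pmulr_lge0 ?invr_gt0 // subr_ge0.
by field; rewrite gt_eqF.
Qed.

Lemma sup_ge0 (R : realType) (E : set R) :
  (forall x, E x -> 0 <= x) -> 0 <= sup E.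
Proof.
(* [sup] is 0 on sets without a supremum. *)
move=> E_ge0; have [[[e Ee] E_ub]|no_sup] := pselect (has_sup E).
  exact: le_trans (E_ge0 e Ee) (ub_le_sup E_ub Ee).
by rewrite sup_out.
Qed.

Lemma sup_sqr_le (R : realType) (E : set R) (b : R) : 0 <= b ->
  (forall x, E x -> 0 <= x /\ x ^+ 2 <= b) -> sup E ^+ 2 <= b.
Proof.
move=> b_ge0 E_b; have sup_ge0E : 0 <= sup E by apply: sup_ge0 => x /E_b[].
suff : sup E <= Num.sqrt b by rewrite -ler_sqr ?nnegrE ?sqrtr_ge0 // sqr_sqrtr.
have [->|/set0P E_neq0] := eqVneq E set0; first by rewrite sup0 sqrtr_ge0.
apply: ge_sup E_neq0 _ => x /E_b[x_ge0 x2_le].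
by rewrite -ler_sqr ?nnegrE ?sqrtr_ge0 // sqr_sqrtr.
Qed.

Section InnerProduct.
Variables (R : realType) (V : lmodType R[i]) (ip : V -> V -> R[i]).
Hypothesis ip_inner : is_inner_product ip.
Local Open Scope complex_scope.

Lemma ipDl x y z : ip (x + y) z = ip x z + ip y z.
Proof. by case: ip_inner. Qed.

Lemma ipZl a x y : ip (a *: x) y = a * ip x y.
Proof. by case: ip_inner. Qed.

Lemma ip_conj x y : ip y x = (ip x y)^*.
Proof. by case: ip_inner. Qed.

Lemma ipDr x y z : ip z (x + y) = ip z x + ip z y.
Proof. by rewrite ip_conj ipDl rmorphD /= -!ip_conj. Qed.

Lemma ipZr a x y : ip x (a *: y) = a^* * ip x y.
Proof. by rewrite ip_conj ipZl rmorphM /= -ip_conj. Qed.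

Lemma ipNl x y : ip (- x) y = - ip x y.
Proof. by rewrite -scaleN1r ipZl mulN1r. Qed.

Lemma ipNr x y : ip x (- y) = - ip x y.
Proof. by rewrite -scaleN1r ipZr rmorphN1 mulN1r. Qed.

Lemma ipBZ x y s :
  ip (x - s *: y) (x - s *: y) =
    ip x x - s^* * ip x y - s * (ip x y)^* + s * s^* * ip y y.
Proof.
rewrite !(ipDl, ipDr, ipNl, ipNr, ipZl, ipZr) [ip y x]ip_conj; ring.
Qed.

Lemma hnorm_ge0 x : 0 <= hnorm ip x.
Proof. exact: sqrtr_ge0. Qed.

Lemma ipxx x : ip x x = (hnorm ip x ^+ 2)%:C.
Proof.
have : 0 <= ip x x by case: ip_inner.
rewrite /hnorm; case: (ip x x) => a b; rewrite lecE /= => /andP[/eqP-> a_ge0].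
by rewrite sqr_sqrtr.
Qed.

Lemma cauchy_schwarz x y : normc (ip x y) <= hnorm ip x * hnorm ip y.
Proof.
rewrite -ler_sqr ?nnegrE ?normc_ge0 ?mulr_ge0 ?hnorm_ge0 // exprMn.
apply: quadratic_ge0_le; rewrite ?sqr_ge0 // => t.
have := sqr_ge0 (hnorm ip (x - (t%:C * ip x y) *: y)).
congr (_ <= _); apply: complexI; rewrite -ipxx ipBZ !ipxx.
by case: (ip x y) => a b; rewrite sqr_normc /=; simpc; congr (_ +i* _); ring.
Qed.

Lemma hnormD u v : hnorm ip (u + v) <= hnorm ip u + hnorm ip v.
Proof.
have expand : hnorm ip (u + v) ^+ 2 =
    hnorm ip u ^+ 2 + hnorm ip v ^+ 2 + 2 * complex.Re (ip u v).
  rewrite -[LHS]/(complex.Re (_%:C)) -ipxx ipDl !ipDr !ipxx [ip v u]ip_conj.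
  by case: (ip u v) => a b /=; simpc; rewrite /=; ring.
rewrite -ler_sqr ?nnegrE ?addr_ge0 ?hnorm_ge0 // expand.
have := le_trans (Re_le_normc (ip u v)) (cauchy_schwarz u v); nra.
Qed.

Lemma buzano u v e : hnorm ip e = 1 ->
  2 * normc (ip u e * ip e v) <= hnorm ip u * hnorm ip v + normc (ip u v).
Proof.
(* w is the reflection of u across the line spanned by e. *)
move=> e_unit; set w := u - (ip u e *+ 2) *: e.
have w_norm : hnorm ip w = hnorm ip u.
  rewrite /hnorm ipBZ (ipxx e) e_unit expr1n rmorphMn /=.
  by congr (Num.sqrt (complex.Re _)); ring.
have wv : ip w v = ip u v - (ip u e * ip e v) *+ 2.
  by rewrite ipDl ipNl ipZl mulrnAl.
have := cauchy_schwarz w v; rewrite w_norm wv.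
have := le_normcD ((ip u e * ip e v) *+ 2 - ip u v) (ip u v).
rewrite subrK normcMn -[_ *+ 2 - _]opprB normcN !mulr2n; lra.
Qed.

Definition op_bounded_by (B : V -> V) (M : R) :=
  forall x, hnorm ip (B x) <= M * hnorm ip x.

Lemma op_bounded_by_comp B C M N : 0 <= M ->
  op_bounded_by B M -> op_bounded_by C N -> op_bounded_by (B \o C) (M * N).
Proof.
move=> M_ge0 BM CN x; apply: le_trans (BM (C x)) _.
by rewrite -mulrA ler_wpM2l.
Qed.

Lemma op_bounded_by_add B C M N : op_bounded_by B M -> op_bounded_by C N ->
  op_bounded_by (fun x => B x + C x) (M + N).
Proof.
by move=> BM CN x; rewrite mulrDl; apply: le_trans (hnormD _ _) (lerD _ _).
Qed.

Lemma op_bounded_by_adjoint A As M : is_adjoint ip A As ->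
  op_bounded_by A M -> op_bounded_by As M.
Proof.
move=> adj AM y.
have sqr_le : hnorm ip (As y) ^+ 2 <= M * hnorm ip y * hnorm ip (As y).
  rewrite -[_ ^+ 2]/(complex.Re (_%:C)) -ipxx -adj.
  apply: le_trans (Re_le_normc _) _; apply: le_trans (cauchy_schwarz _ _) _.
  by rewrite mulrAC; apply: ler_wpM2r; [exact: hnorm_ge0 | exact: AM].
have My_ge0 : 0 <= M * hnorm ip y := le_trans (hnorm_ge0 _) (AM y).
have := hnorm_ge0 (As y); nra.
Qed.

Lemma le_numrad B M x : op_bounded_by B M -> unit_sphere ip x ->
  normc (ip (B x) x) <= numrad ip B.
Proof.
move=> BM x_unit; apply: ub_le_sup; last by exists x.
exists M => _ [y y_unit <-]; apply: le_trans (cauchy_schwarz _ _) _.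
by have := BM y; rewrite y_unit !mulr1.
Qed.

Lemma le_opnorm B M x : op_bounded_by B M -> unit_sphere ip x ->
  hnorm ip (B x) <= opnorm ip B.
Proof.
move=> BM x_unit; apply: ub_le_sup; last by exists x.
by exists M => _ [y y_unit <-]; have := BM y; rewrite y_unit mulr1.
Qed.

Lemma numrad_ge0 B : 0 <= numrad ip B.
Proof. by apply: sup_ge0 => _ [x _ <-]; exact: normc_ge0. Qed.

Lemma opnorm_ge0 B : 0 <= opnorm ip B.
Proof. by apply: sup_ge0 => _ [x _ <-]; exact: hnorm_ge0. Qed.

Section Adjoint.
Variables A As : V -> V.
Hypothesis adj : is_adjoint ip A As.

Let T x := A (As x) + As (A x).

Lemma Re_ip_AAs_AsA x :
  complex.Re (ip (T x) x) = hnorm ip (As x) ^+ 2 + hnorm ip (A x) ^+ 2.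
Proof.
by rewrite /T ipDl adj [ip (As (A x)) x]ip_conj -(adj x) !ipxx conjc_real.
Qed.

Lemma buzano_adjoint x : unit_sphere ip x ->
  2 * normc (ip (A x) x) ^+ 2 <=
    hnorm ip (A x) * hnorm ip (As x) + normc (ip (A (A x)) x).
Proof.
move=> x_unit; have := buzano (A x) (As x) x_unit.
by rewrite -!adj normcM.
Qed.

Lemma numrange_sqr_le N x : op_bounded_by T N -> unit_sphere ip x ->
  2 * normc (ip (A x) x) ^+ 2 <= normc (ip (A (A x)) x) + 2^-1 * opnorm ip T.
Proof.
move=> TN x_unit; apply: le_trans (buzano_adjoint x_unit) _.
rewrite addrC lerD2l.
have Tx_le : complex.Re (ip (T x) x) <= opnorm ip T.
  apply: le_trans (Re_le_normc _) _; apply: le_trans (cauchy_schwarz _ _) _.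
  by rewrite x_unit mulr1; exact: le_opnorm TN x_unit.
rewrite Re_ip_AAs_AsA in Tx_le.
have := sqr_ge0 (hnorm ip (A x) - hnorm ip (As x)); lra.
Qed.

Lemma numrad_combination_sqr_le (p q M : R) x : 0 <= M -> op_bounded_by A M ->
  unit_sphere ip x ->
  normc (ip (p%:C *: A x + q%:C *: As x) x) ^+ 2 <=
    (`|p| ^+ 2 + `|q| ^+ 2) * numrad ip A ^+ 2 + `|p * q| * numrad ip (A \o A)
    + 2^-1 * `|p * q| * opnorm ip T.
Proof.
move=> M_ge0 AM x_unit; have AsM := op_bounded_by_adjoint adj AM.
have TMM := op_bounded_by_add (op_bounded_by_comp M_ge0 AM AsM)
                              (op_bounded_by_comp M_ge0 AsM AM).
rewrite ipDl !ipZl [ip (As x) x]ip_conj -adj.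
apply: le_trans (normc_real_comb _ _ _) _.
rewrite [2^-1 * _]mulrC -mulrA -addrA -mulrDr; apply: lerD.
  apply: ler_wpM2l; first by rewrite addr_ge0 ?sqr_ge0.
  rewrite ler_sqr ?nnegrE ?normc_ge0 ?numrad_ge0 //.
  exact: le_numrad AM x_unit.
apply: ler_wpM2l => //; apply: le_trans (numrange_sqr_le TMM x_unit) _.
by rewrite lerD2r; exact: le_numrad (op_bounded_by_comp M_ge0 AM AM) x_unit.
Qed.

End Adjoint.

End InnerProduct.

Theorem theorem3p11 (R : realType) (V : lmodType R[i]) (ip : V -> V -> R[i])
  (HV : is_hilbert ip) (phi psi : R -> R)
  (cphi : {within `[0, 1], continuous phi})
  (cpsi : {within `[0, 1], continuous psi})
  (A Astar : V -> V) (HA : bounded_op ip A) (HAstar : is_adjoint ip A Astar)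
  (t : R) (ht : t \in `[0, 1]) :
  omega_t ip phi psi A Astar t ^+ 2 <=
    (`|phi t| ^+ 2 + `|psi t| ^+ 2) * numrad ip A ^+ 2
    + `|phi t * psi t| * numrad ip (A \o A)
    + 2^-1 * `|phi t * psi t| * opnorm ip (fun x => A (Astar x) + Astar (A x)).
Proof.
have [[ip_inner _] [_ _ [M AM]]] := (HV, HA).
have {}AM : op_bounded_by ip A `|M|.
  by move=> x; apply: le_trans (AM x) (ler_wpM2r (hnorm_ge0 ip x) (ler_norm M)).
apply: sup_sqr_le => [|_ [x x_unit <-]].
  by rewrite !addr_ge0 ?mulr_ge0 ?invr_ge0 ?sqr_ge0 ?numrad_ge0 ?opnorm_ge0.
split; first exact: normc_ge0.
exact (numrad_combination_sqr_le ip_inner HAstar (phi t) (psi t)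
                                  (normr_ge0 M) AM x_unit).
Qed.
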